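(* (1) Let $C\otimes\mathbb Q=\{t^r\mid r\in\mathbb Q\}$ denote the additive group $\mathbb Q$ written multiplicatively. Make $\mathbb Q[\![x]\!]$ a $C\otimes\mathbb Q$-module by letting $t^r$ act as multiplication by $(1+x)^r=\sum_{n\ge 0}\binom{r}{n}x^n$, where $\binom{r}{n}=r(r-1)\cdots(r-n+1)/n!$. Let $\Lambda^2(\mathbb Q[\![x]\!])$ be the exterior square over $\mathbb Q$ with the diagonal action $t^r(f\wedge g)=(1+x)^rf\wedge(1+x)^rg$, and let $(\Lambda^2(\mathbb Q[\![x]\!]))_{C\otimes\mathbb Q}$ be its module of coinvariants. Then the kernel of the $\mathbb Q$-linear map $\theta_{\mathbb Q}:\mathbb Q[\![x]\!]\to(\Lambda^2(\mathbb Q[\![x]\!]))_{C\otimes\mathbb Q}$, $\theta_{\mathbb Q}(f)=f\wedge 1$, is countable. (2) Let $p$ be an odd prime and $C=\langle t\rangle$ the infinite cyclic group. Make $\mathbb Z/p[\![x]\!]$ a $C$-module by letting $t$ act as multiplication by $1+x$. Let $\Lambda^2(\mathbb Z/p[\![x]\!])$ be the exterior square over $\mathbb Z/p$ with the diagonal action of $C$, and $(\Lambda^2(\mathbb Z/p[\![x]\!]))_C$ its coinvariants. Then the kernel of the map $\theta_{\mathbb Z/p}:\mathbb Z/p[\![x]\!]\to(\Lambda^2(\mathbb Z/p[\![x]\!]))_C$, $\theta_{\mathbb Z/p}(f)=f\wedge 1$, is countable.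
   Context: For a group $H$ acting on a module $M$, the coinvariants $M_H$ are the quotient of $M$ by the subgroup generated by $hm-m$, $h\in H$, $m\in M$. *)

From HB Require Import structures.
From mathcomp Require Import all_boot all_order all_algebra.
From mathcomp Require Import boolp classical_sets cardinality.
Set Implicit Arguments. Unset Strict Implicit. Unset Printing Implicit Defensive.
Import Order.TTheory GRing.Theory Num.Theory.
Local Open Scope ring_scope.

Section PowerSeries.
Variable K : fieldType.

Definition ps := nat -> K.
Definition ps_add (f g : ps) : ps := fun n => f n + g n.
Definition ps_scale (c : K) (f : ps) : ps := fun n => c * f n.
Definition ps_mul (f g : ps) : ps := fun n => \sum_(i < n.+1) f i * g (n - i)%N.
Definition ps_one : ps := fun n => if n is 0 then 1 else 0.
Definition ps_onepx : ps := fun n => if (n <= 1)%N then 1 else 0.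
Definition ps_onepx_inv : ps := fun n => (-1) ^+ n.
Definition ps_pow_int (k : int) : ps :=
  match k with
  | Posz n => iter n (ps_mul ps_onepx) ps_one
  | Negz n => iter n.+1 (ps_mul ps_onepx_inv) ps_one
  end.

(* Free K-vector space on the set K[[x]] x K[[x]] (finitely supported
   functions; only finite combinations of basis vectors are ever formed). *)
Definition fv := ps * ps -> K.
Definition fv_delta (a b : ps) : fv :=
  fun z => if pselect (z = (a, b)) then 1 else 0.
Definition fv_sub (v w : fv) : fv := fun z => v z - w z.

Inductive in_span (P : fv -> Prop) : fv -> Prop :=
| span0 : in_span P (fun _ => 0)
| span_step (c : K) (v w : fv) :
    P v -> in_span P w -> in_span P (fun z => c * v z + w z).

(* Relations defining Lambda^2_K(K[[x]]) as a quotient of fv (bilinearity and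
   a /\ a = 0), together with the coinvariance relations
   h.(a /\ b) - a /\ b = (u a) /\ (u b) - a /\ b for the group elements h,
   which act by multiplication by the series u in the set U. *)
Definition coinv_ext2_rel (U : set ps) (v : fv) : Prop :=
  (exists a a' b : ps, v = fv_sub (fv_sub (fv_delta (ps_add a a') b)
                                          (fv_delta a b)) (fv_delta a' b))
  \/ (exists a b b' : ps, v = fv_sub (fv_sub (fv_delta a (ps_add b b'))
                                          (fv_delta a b)) (fv_delta a b'))
  \/ (exists (c : K) (a b : ps),
        v = fv_sub (fv_delta (ps_scale c a) b) (fun z => c * fv_delta a b z))
  \/ (exists (c : K) (a b : ps),
        v = fv_sub (fv_delta a (ps_scale c b)) (fun z => c * fv_delta a b z))
  \/ (exists a : ps, v = fv_delta a a)
  \/ (exists u a b : ps, U u /\ v = fv_sub (fv_delta (ps_mul u a) (ps_mul u b))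
                                            (fv_delta a b)).

(* Kernel of theta : K[[x]] -> (Lambda^2 K[[x]])_G, f |-> class of f /\ 1,
   where G acts through the multiplications by the series in U. *)
Definition theta_ker (U : set ps) : set ps :=
  [set f | in_span (coinv_ext2_rel U) (fv_delta f ps_one)].

End PowerSeries.

Definition binom_rat (r : rat) (n : nat) : rat :=
  (\prod_(i < n) (r - i%:R)) / (n`!)%:R.
Definition onepx_rat (r : rat) : ps rat := fun n => binom_rat r n.

From HB Require Import structures.
From mathcomp Require Import all_boot all_order all_algebra.
From mathcomp Require Import boolp classical_sets cardinality.
From mathcomp Require Import generic_quotient zify ring.
Set Implicit Arguments. Unset Strict Implicit. Unset Printing Implicit Defensive.
Import Order.TTheory GRing.Theory Num.Theory.
Local Open Scope ring_scope.

(* Suppose the acting group consists of the powers of a series s = 1 + c x + ...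
   (c != 0) and of its inverse s'; for Q this holds for the finitely many
   elements (1 + x)^r used to witness membership in the kernel, with
   s = (1 + x)^(1/d) for a common denominator d.  If f /\ 1 vanishes in the
   coinvariants, finitely many relations among finitely many series witness it.
   If f and 1 were linearly independent both over K[s] and over K[s'], linear
   algebra over K(X) would give functionals lam, mu on these series, K[s]-linear
   resp. K[s']-linear on the relations with s resp. s' acting as X, such that
   lam 1 = mu f = 0 and lam f = mu 1 = 1.  Then lam a * mu b - lam b * mu a is an
   alternating form killing all the relations (s scales lam by X and mu by 1/X)
   but not f /\ 1.  Hence f = - A(s) / B(s) for polynomials A, B, or the same
   with s'; as s is transcendental over K, a countable K leaves countably many
   such f. *)

Local Notation "x %:F" := (@tofrac _ x).

Definition pseries (K : fieldType) : Type := ps K.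
HB.instance Definition _ (K : fieldType) := gen_eqMixin (pseries K).
HB.instance Definition _ (K : fieldType) := gen_choiceMixin (pseries K).

Section PowerSeriesRing.
Variable K : fieldType.
Local Notation P := (pseries K).

Definition ps_opp (f : P) : P := fun n => - f n.

Lemma ps_addA : associative (@ps_add K).
Proof. by move=> f g h; apply: funext => n; rewrite /ps_add addrA. Qed.

Lemma ps_addC : commutative (@ps_add K).
Proof. by move=> f g; apply: funext => n; rewrite /ps_add addrC. Qed.

Lemma ps_add0 : left_id (fun _ => 0 : K) (@ps_add K).
Proof. by move=> f; apply: funext => n; rewrite /ps_add add0r. Qed.

Lemma ps_addN : left_inverse (fun _ => 0 : K) ps_opp (@ps_add K).
Proof. by move=> f; apply: funext => n; rewrite /ps_add addNr. Qed.

HB.instance Definition _ := GRing.isZmodule.Build P ps_addA ps_addC ps_add0 ps_addN.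

Definition ps_trunc (n : nat) (f : P) : {poly K} := \poly_(i < n.+1) f i.

Lemma ps_mul_trunc (f g : P) n i : (i <= n)%N ->
  ps_mul f g i = (ps_trunc n f * ps_trunc n g)`_i.
Proof.
move=> le_in; rewrite coefM; apply: eq_bigr => j _.
by rewrite !coef_poly !ifT //; have := ltn_ord j; lia.
Qed.

Lemma ps_trunc_mul (f g : P) n i : (i <= n)%N ->
  (ps_trunc n (ps_mul f g))`_i = (ps_trunc n f * ps_trunc n g)`_i.
Proof. by move=> le_in; rewrite coef_poly ltnS le_in (ps_mul_trunc _ _ le_in). Qed.

Lemma coefM_eq_low (p p' q : {poly K}) n :
  (forall i, (i <= n)%N -> p`_i = p'`_i) -> (p * q)`_n = (p' * q)`_n.
Proof. by move=> eq_pp'; rewrite !coefM; apply: eq_bigr => i _; rewrite eq_pp' // -ltnS. Qed.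

(* Associativity is inherited from {poly K} through truncation. *)
Lemma ps_mulA : associative (@ps_mul K).
Proof.
move=> f g h; apply: funext => n.
rewrite (ps_mul_trunc _ _ (leqnn n)) [RHS](ps_mul_trunc _ _ (leqnn n)) mulrC.
rewrite (coefM_eq_low _ (ps_trunc_mul g h (n := n))).
by rewrite [RHS](coefM_eq_low _ (ps_trunc_mul f g (n := n))) mulrC mulrA.
Qed.

Lemma ps_mulC : commutative (@ps_mul K).
Proof. by move=> f g; apply: funext => n; rewrite !(ps_mul_trunc _ _ (leqnn n)) mulrC. Qed.

Lemma ps_mul1 : left_id (ps_one K) (@ps_mul K).
Proof.
move=> f; apply: funext => n; rewrite /ps_mul big_ord_recl mul1r subn0.
by rewrite big1 ?addr0 // => i _; rewrite mul0r.
Qed.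

Lemma ps_mulDl : left_distributive (@ps_mul K) (@ps_add K).
Proof.
move=> f g h; apply: funext => n; rewrite /ps_mul /ps_add -big_split /=.
by apply: eq_bigr => i _; rewrite mulrDl.
Qed.

Lemma ps_one_neq0 : ps_one K != 0 :> P.
Proof. by apply/eqP => /(congr1 (fun f : P => f 0%N)) /eqP; rewrite oner_eq0. Qed.

HB.instance Definition _ :=
  GRing.Zmodule_isComNzRing.Build P ps_mulA ps_mulC ps_mul1 ps_mulDl ps_one_neq0.

Lemma coef_psM (f g : P) n : (f * g) n = \sum_(i < n.+1) f i * g (n - i)%N.
Proof. by []. Qed.

Lemma coef_psB (f g : P) n : (f - g) n = f n - g n.
Proof. by []. Qed.

Lemma coef_ps_sum I (r : seq I) (Q : pred I) (F : I -> P) n :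
  (\sum_(i <- r | Q i) F i) n = \sum_(i <- r | Q i) F i n.
Proof. by elim/big_rec2: _ => // i y1 y2 _ <-. Qed.

Lemma ps_neq0_order (f : P) : f != 0 ->
  exists2 a, f a != 0 & forall j, (j < a)%N -> f j = 0.
Proof.
move=> f_neq0; have f_nz : exists n, f n != 0.
  apply: contra_notP (negP f_neq0) => all0; apply/eqP/funext => n.
  by apply/eqP; apply: contra_notT all0 => ?; exists n.
case: (ex_minnP f_nz) => a fa_neq0 min_a; exists a => // j lt_ja.
by apply/eqP; apply: contraTT lt_ja => /min_a; rewrite leqNgt.
Qed.

Lemma coefM_order (f g : P) a b :
    (forall j, (j < a)%N -> f j = 0) -> (forall j, (j < b)%N -> g j = 0) ->
  (forall n, (n < a + b)%N -> (f * g) n = 0) /\ (f * g) (a + b)%N = f a * g b.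
Proof.
move=> f_low g_low; have fg0 n (i : 'I_n.+1) :
    i != a :> nat -> (n <= a + b)%N -> f i * g (n - i)%N = 0.
  move=> neq_ia le_n_ab; have [lt_ia | le_ai] := ltnP i a; first by rewrite f_low ?mul0r.
  by rewrite g_low ?mulr0 //; have := ltn_ord i; lia.
split=> [n lt_n_ab | ].
  rewrite coef_psM big1 // => i _; have [eq_ia | /fg0 -> //] := eqVneq (i : nat) a.
    by rewrite g_low ?mulr0 //; have := ltn_ord i; lia.
  exact: ltnW.
have lt_a_ab : (a < (a + b).+1)%N by rewrite ltnS leq_addr.
rewrite coef_psM (bigD1 (Ordinal lt_a_ab)) //= addKn big1 ?addr0 // => i neq_ia.
by apply: fg0 => //; apply: contra neq_ia => /eqP eq_ia; apply/eqP/val_inj.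
Qed.

Lemma ps_mulf_neq0 (f g : P) : f != 0 -> g != 0 -> f * g != 0.
Proof.
move=> /ps_neq0_order [a fa_neq0 f_low] /ps_neq0_order [b gb_neq0 g_low].
apply/eqP => /(congr1 (fun h : P => h (a + b)%N)) /eqP.
by rewrite (coefM_order f_low g_low).2 mulf_eq0 (negPf fa_neq0) (negPf gb_neq0).
Qed.

Lemma ps_mulfI (f : P) : f != 0 -> injective (GRing.mul f).
Proof.
move=> f_neq0 g h eq_fgh; apply/eqP; rewrite -subr_eq0; apply/negPn/negP.
by move=> /(ps_mulf_neq0 f_neq0); rewrite mulrBr eq_fgh subrr eqxx.
Qed.

Lemma coef_exp_order (y : P) i : y 0%N = 0 ->
  (forall n, (n < i)%N -> (y ^+ i) n = 0) /\ (y ^+ i) i = y 1%N ^+ i.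
Proof.
move=> y0; elim: i => [|i [low_i coef_i]]; first by split.
have y_low j : (j < 1)%N -> y j = 0 by case: j.
have [low coef] := coefM_order y_low low_i; rewrite add1n in low coef.
by rewrite exprS; split=> //; rewrite coef coef_i exprS.
Qed.

Definition cst (c : K) : P := fun n => if n is 0 then c else 0.

Lemma coef_cstM c (f : P) n : (cst c * f) n = c * f n.
Proof. by rewrite coef_psM big_ord_recl subn0 big1 ?addr0 // => i _; rewrite mul0r. Qed.

Lemma cst_is_zmod_morphism : zmod_morphism cst.
Proof. by move=> a b; apply: funext => -[|n] //; have := subrr (0 : K). Qed.

HB.instance Definition _ := GRing.isZmodMorphism.Build K P cst cst_is_zmod_morphism.

Lemma cst_is_monoid_morphism : monoid_morphism cst.
Proof. by split=> // a b; apply: funext => -[|n]; rewrite coef_cstM //= mulr0. Qed.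

HB.instance Definition _ := GRing.isMonoidMorphism.Build K P cst cst_is_monoid_morphism.

Lemma ps_scaleE c (f : P) : ps_scale c f = cst c * f.
Proof. by apply: funext => n; rewrite coef_cstM. Qed.

Definition ev (t : P) : {poly K} -> P :=
  horner_morph (fun c => mulrC t (cst c) : GRing.comm t (cst c)).

HB.instance Definition _ (t : P) := GRing.RMorphism.copy (ev t)
  (horner_morph (fun c => mulrC t (cst c) : GRing.comm t (cst c))).

Lemma evE t A : ev t A = (map_poly cst A).[t].
Proof. by []. Qed.

Lemma evC t c : ev t c%:P = cst c.
Proof. exact: horner_morphC. Qed.

Lemma evXn t n : ev t 'X^n = t ^+ n.
Proof. by rewrite evE map_polyXn hornerXn. Qed.

(* The lowest nonzero coefficient [B_k] of [B] gives the coefficient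
   [B_k * y_1 ^+ k] of [x ^+ k] in [B(y)]. *)
Lemma ev_order1_neq0 (y : P) (B : {poly K}) :
  y 0%N = 0 -> y 1%N != 0 -> B != 0 -> ev y B != 0.
Proof.
move=> y0 y1_neq0 B_neq0; have [|k Bk_neq0 B_low] := @ps_neq0_order (fun k => B`_k).
  apply: contra B_neq0 => /eqP B0; apply/eqP/polyP => k.
  by rewrite coef0 (congr1 (fun f : P => f k) B0).
have lt_kB : (k < size B)%N by rewrite ltnNge; apply: contra Bk_neq0 => /leq_sizeP ->.
apply/eqP => /(congr1 (fun f : P => f k)) /eqP.
rewrite evE horner_coef size_map_poly coef_ps_sum (bigD1 (Ordinal lt_kB)) //= big1.
  rewrite addr0 coef_map coef_cstM (coef_exp_order k y0).2 mulf_eq0 expf_eq0.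
  by rewrite (negPf Bk_neq0) (negPf y1_neq0) andbF.
move=> i /eqP neq_ik; rewrite coef_map coef_cstM.
have [lt_ik | le_ki] := ltnP i k; first by rewrite B_low ?mul0r.
rewrite (coef_exp_order i y0).1 ?mulr0 // ltn_neqAle le_ki andbT.
by apply/eqP => eq_ki; apply: neq_ik; apply: val_inj; rewrite /= eq_ki.
Qed.

Lemma ev_neq0 (t : P) (A : {poly K}) :
  t 0%N = 1 -> t 1%N != 0 -> A != 0 -> ev t A != 0.
Proof.
move=> t0 t1_neq0 A_neq0.
have -> : ev t A = ev (t - 1) (A \Po ('X + 1)).
  rewrite !evE map_comp_poly horner_comp rmorphD /= map_polyX map_polyC.
  by rewrite hornerD hornerX hornerC subrK.
apply: ev_order1_neq0; rewrite ?coef_psB.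
- by rewrite t0 subrr.
- by rewrite subr0.
- by rewrite -size_poly_eq0 size_comp_poly2 ?size_poly_eq0 // -polyC1 size_XaddC.
Qed.

End PowerSeriesRing.

Section CommonDenominator.
Variable R : idomainType.

Lemma frac_denominator (x : {fraction R}) :
  exists2 b : R, b != 0 & exists a, b%:F * x = a%:F.
Proof.
elim/quotW: x => r; exists \d_r; first exact: denom_ratioP.
exists \n_r; rewrite !piE; apply/eqmodP; rewrite /= FracField.equivfE /FracField.mulf /=.
by rewrite !numden_Ratio ?mul1r ?denom_ratioP ?mulr1 //; exact: oner_neq0.
Qed.

Lemma rV_common_denominator n (u : 'rV[{fraction R}]_n) :
  exists2 d : R, d != 0 & exists a : 'rV[R]_n, d%:F *: u = map_mx (@tofrac R) a.
Proof.
have [frac frac_neq0 fracP] : exists2 frac : 'I_n -> R * R,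
    forall j, (frac j).1 != 0 & forall j, (frac j).1%:F * u 0 j = (frac j).2%:F.
  apply: (@fin_all_exists2 _ (fun=> (R * R)%type) (fun j fr => fr.1 != 0)
    (fun j fr => fr.1%:F * u 0 j = fr.2%:F)) => j.
  by have [b b_neq0 [a ba]] := frac_denominator (u 0 j); exists (b, a).
exists (\prod_j (frac j).1); first by apply/prodf_neq0 => j _.
exists (\row_j ((frac j).2 * \prod_(k | k != j) (frac k).1)).
apply/matrixP => i j; rewrite (ord1 i) !mxE (bigD1 j) //= !tofracM -fracP.
by rewrite mulrAC.
Qed.

Lemma map_tofrac_inj m n : injective (map_mx (@tofrac R) : 'M_(m, n) -> 'M_(m, n)).
Proof.
move=> v w /matrixP eq_vw; apply/matrixP => i j.
by have := eq_vw i j; rewrite !mxE => /eqP; rewrite tofrac_eq => /eqP.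
Qed.

End CommonDenominator.

Lemma notsubmx_separating (F : fieldType) m n (B : 'M[F]_(m, n)) (v : 'rV_n) :
  ~~ (v <= B)%MS -> exists c : 'cV_n, B *m c = 0 /\ v *m c = 1.
Proof.
rewrite submxE; set w := v *m cokermx B => w_neq0.
have [j wj_neq0] : exists j, w 0 j != 0.
  apply: contra_notP (negP w_neq0) => all0; apply/eqP/matrixP => i j.
  by rewrite (ord1 i) [RHS]mxE; apply/eqP; apply: contra_notT all0 => ?; exists j.
have mul_col m' (A : 'M[F]_(m', n)) : A *m col j (cokermx B) = col j (A *m cokermx B).
  by rewrite !colE mulmxA.
exists ((w 0 j)^-1 *: col j (cokermx B)); rewrite -!scalemxAr !mul_col.
split; first by rewrite mulmx_coker col0 scaler0.
apply/matrixP => i k; rewrite (ord1 i) (ord1 k) [LHS]mxE [col _ _ _ _]mxE -/w.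
by rewrite mulVf // mxE.
Qed.

Section Functional.
Variable K : fieldType.
Local Notation P := (pseries K).
Local Notation F := {fraction {poly K}}.
Local Notation relation_seq := (seq ({poly K} * P)).

Definition is_relation (t : P) (L : relation_seq) : Prop :=
  \sum_(x <- L) ev t x.1 * x.2 = 0.

Definition respects (lam : P -> F) (L : relation_seq) : Prop :=
  \sum_(x <- L) x.1%:F * lam x.2 = 0.

Definition free_over (t g h : P) : Prop :=
  forall A B : {poly K}, ev t A * g + ev t B * h = 0 -> A = 0 /\ B = 0.

Lemma free_over_sym t g h : free_over t g h -> free_over t h g.
Proof. by move=> free_gh A B; rewrite addrC => /free_gh [-> ->]. Qed.

Section Coordinates.
Variables (t : P) (G : seq P).
Local Notation m := (size G).

Definition coordv (R : nzRingType) (a : P) : 'rV[R]_m := \row_j (j == index a G :> nat)%:R.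

Definition relv (L : relation_seq) : 'rV[{poly K}]_m := \sum_(x <- L) x.1 *: coordv _ x.2.

Definition relmx (Rs : seq relation_seq) : 'M[{poly K}]_(size Rs, m) :=
  \matrix_(k < size Rs) relv (nth [::] Rs k).

Definition evalv (w : 'rV[{poly K}]_m) : P := \sum_j ev t (w 0 j) * G`_j.

Lemma evalvD w1 w2 : evalv (w1 + w2) = evalv w1 + evalv w2.
Proof. by rewrite /evalv -big_split; apply: eq_bigr => j _; rewrite mxE rmorphD mulrDl. Qed.

Lemma evalvZ c w : evalv (c *: w) = ev t c * evalv w.
Proof. by rewrite /evalv mulr_sumr; apply: eq_bigr => j _; rewrite mxE rmorphM mulrA. Qed.

Lemma evalv0 : evalv 0 = 0.
Proof. by rewrite -(scale0r 0) evalvZ rmorph0 mul0r. Qed.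

Lemma evalv_sum I (r : seq I) (w : I -> 'rV_m) :
  evalv (\sum_(i <- r) w i) = \sum_(i <- r) evalv (w i).
Proof. exact: (big_morph evalv evalvD evalv0). Qed.

Lemma evalv_mul n (a : 'rV_n) (M : 'M_(n, m)) :
  evalv (a *m M) = \sum_k ev t (a 0 k) * evalv (row k M).
Proof. by rewrite mulmx_sum_row evalv_sum; apply: eq_bigr => k _; rewrite evalvZ. Qed.

Lemma evalv_coordv a : a \in G -> evalv (coordv _ a) = a.
Proof.
move=> aG; have lt_aG : (index a G < m)%N by rewrite index_mem.
rewrite /evalv (bigD1 (Ordinal lt_aG)) //= big1 ?addr0 => [|j /negPf neq_ja].
  by rewrite mxE eqxx rmorph1 mul1r nth_index.
by rewrite mxE (_ : _ == _ = false) ?rmorph0 ?mul0r // -neq_ja.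
Qed.

Lemma evalv_relv L :
  {subset unzip2 L <= G} -> evalv (relv L) = \sum_(x <- L) ev t x.1 * x.2.
Proof.
move=> LG; rewrite evalv_sum big_seq [RHS]big_seq; apply: eq_bigr => x xL.
by rewrite evalvZ evalv_coordv // LG // map_f.
Qed.

Lemma map_coordv a : map_mx (@tofrac _) (coordv _ a) = coordv F a.
Proof. by apply/matrixP => i j; rewrite !mxE rmorph_nat. Qed.

Lemma map_relv L : map_mx (@tofrac _) (relv L) = \sum_(x <- L) x.1%:F *: coordv F x.2.
Proof. by rewrite map_mx_sum; apply: eq_bigr => x _; rewrite map_mxZ map_coordv. Qed.

(* Clearing denominators turns a K(X)-combination of the rows into a relation
   [D(t) * h = C(t) * g] with [D != 0]. *)
Lemma coordv_notin_relations Rs g h :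
    g \in G -> h \in G ->
    (forall L, L \in Rs -> is_relation t L /\ {subset unzip2 L <= G}) ->
    free_over t g h ->
  ~~ (coordv F h <= col_mx (map_mx (@tofrac _) (relmx Rs)) (coordv F g))%MS.
Proof.
move=> gG hG RsG free_gh; apply/negP => /submxP [u hu].
have [d d_neq0 [a da]] := rV_common_denominator u.
have : d *: coordv _ h = a *m col_mx (relmx Rs) (coordv _ g).
  apply: map_tofrac_inj.
  by rewrite map_mxZ map_mxM map_col_mx !map_coordv hu scalemxAl da.
rewrite -[a]hsubmxK mul_row_col [rsubmx a]mx11_scalar mul_scalar_mx => /(congr1 evalv).
rewrite evalvD evalv_mul !evalvZ !evalv_coordv // big1 => [|k _]; last first.
  have [relL LG] := RsG _ (mem_nth [::] (ltn_ord k)).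
  by rewrite rowK evalv_relv // relL mulr0.
rewrite add0r => /eqP; rewrite eq_sym -subr_eq0 -mulNr -rmorphN => /eqP.
by move=> /free_gh [_ /eqP]; rewrite oppr_eq0 (negPf d_neq0).
Qed.

End Coordinates.

Lemma exists_functional (t : P) (Rs : seq relation_seq) (g h : P) :
    (forall L, L \in Rs -> is_relation t L) -> free_over t g h ->
  exists lam : P -> F,
    [/\ forall L, L \in Rs -> respects lam L, lam g = 0 & lam h = 1].
Proof.
move=> rel_Rs free_gh; set G := g :: h :: flatten (map unzip2 Rs).
have RsG L : L \in Rs -> is_relation t L /\ {subset unzip2 L <= G}.
  move=> LRs; split=> [|a aL]; first exact: rel_Rs.
  by rewrite !inE; apply/or3P/Or33/flattenP; exists (unzip2 L); rewrite ?map_f.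
have gG : g \in G by rewrite mem_head.
have hG : h \in G by rewrite !inE eqxx orbT.
have [c [/eqP]] := notsubmx_separating (coordv_notin_relations gG hG RsG free_gh).
rewrite mul_col_mx col_mx_eq0 => /andP [/eqP rel_c /eqP g_c] h_c.
exists (fun a => (coordv G F a *m c) 0 0); split.
- move=> L LRs; have lt_L : (index L Rs < size Rs)%N by rewrite index_mem.
  move: rel_c => /(congr1 (row (Ordinal lt_L))); rewrite row_mul row0 -map_row rowK.
  rewrite nth_index // map_relv mulmx_suml => /(congr1 (fun M : 'M_1 => M 0 0)).
  rewrite summxE [RHS]mxE => sum_c; rewrite /respects -[RHS]sum_c.
  by apply: eq_bigr => x _; rewrite -scalemxAl [RHS]mxE.
- by rewrite g_c mxE.
- by rewrite h_c mxE.
Qed.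

End Functional.

Section AlternatingForm.
Variable K : fieldType.
Local Notation P := (pseries K).
Local Notation F := {fraction {poly K}}.
Variables (lam mu : P -> F).

Definition altf (a b : P) : F := lam a * mu b - lam b * mu a.

Definition form_on (G : seq P) (v : fv K) : F :=
  \sum_(z <- undup [seq (a, b) | a <- G, b <- G]) (v z)%:P%:F * altf z.1 z.2.

Lemma fv_deltaE (a b : P) z : fv_delta a b z = (z == (a, b))%:R.
Proof.
rewrite /fv_delta; destruct (pselect _) as [-> | neq_zab]; first by rewrite eqxx.
by rewrite /= (introF eqP neq_zab).
Qed.

Lemma form_on_delta G a b :
  a \in G -> b \in G -> form_on G (fv_delta a b) = altf a b.
Proof.
move=> aG bG; have abG : (a, b) \in undup [seq (a, b) | a <- G, b <- G].
  by rewrite mem_undup; apply: allpairs_f.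
rewrite /form_on (bigD1_seq (a, b)) ?undup_uniq //= big1 => [|z /negPf neq_zab].
  by rewrite fv_deltaE eqxx rmorph1 mul1r addr0.
by rewrite fv_deltaE neq_zab rmorph0 mul0r.
Qed.

Lemma form_on_comb G c v w :
  form_on G (fun z => c * v z + w z) = c%:P%:F * form_on G v + form_on G w.
Proof.
rewrite /form_on mulr_sumr -big_split; apply: eq_bigr => z _.
by rewrite polyCD polyCM !rmorphD !rmorphM mulrDl mulrA.
Qed.

Lemma form_on0 G : form_on G (fun _ => 0) = 0.
Proof. by rewrite /form_on big1 // => z _; rewrite rmorph0 mul0r. Qed.

Lemma form_on_sub G v w : form_on G (fv_sub v w) = form_on G v - form_on G w.
Proof.
have -> : fv_sub v w = (fun z => -1 * w z + v z).
  by apply: funext => z; rewrite mulN1r addrC.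
by rewrite form_on_comb polyCN polyC1 rmorphN1 mulN1r addrC.
Qed.

Lemma form_on_scale G c v : form_on G (fun z => c * v z) = c%:P%:F * form_on G v.
Proof.
have -> : (fun z => c * v z) = (fun z => c * v z + (fun _ => 0) z).
  by apply: funext => z; rewrite addr0.
by rewrite form_on_comb form_on0 addr0.
Qed.

Lemma altf_shift q a1 b1 a0 b0 :
    lam a1 = q * lam a0 -> lam b1 = q * lam b0 ->
    mu a0 = q * mu a1 -> mu b0 = q * mu b1 ->
  altf a1 b1 = altf a0 b0.
Proof. by rewrite /altf => -> -> -> ->; ring. Qed.

End AlternatingForm.

Section ElementaryRelations.
Variable K : fieldType.
Local Notation P := (pseries K).
Local Notation F := {fraction {poly K}}.

Definition rel_add (g h k : P) : seq ({poly K} * P) := [:: (1, g); (-1, h); (-1, k)].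

Definition rel_mul (Q : {poly K}) (g h : P) : seq ({poly K} * P) := [:: (1, g); (- Q, h)].

Lemma is_relation_add t g h k : g = h + k -> is_relation t (rel_add g h k).
Proof. by move=> ->; rewrite /is_relation !big_cons big_nil /= rmorph1 rmorphN1; ring. Qed.

Lemma is_relation_mul t Q g h : g = ev t Q * h -> is_relation t (rel_mul Q g h).
Proof. by move=> ->; rewrite /is_relation !big_cons big_nil /= rmorph1 rmorphN; ring. Qed.

Lemma is_relation_scale (t : P) c a : is_relation t (rel_mul c%:P (ps_scale c a) a).
Proof. by apply: is_relation_mul; rewrite evC ps_scaleE. Qed.

Lemma respects_add (lam : P -> F) g h k :
  respects lam (rel_add g h k) -> lam g = lam h + lam k.
Proof.
rewrite /respects !big_cons big_nil /= rmorph1 rmorphN1 => rel.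
by apply/eqP; rewrite -subr_eq0 -rel; apply/eqP; ring.
Qed.

Lemma respects_mul (lam : P -> F) Q g h :
  respects lam (rel_mul Q g h) -> lam g = Q%:F * lam h.
Proof.
rewrite /respects !big_cons big_nil /= rmorph1 rmorphN => rel.
by apply/eqP; rewrite -subr_eq0 -rel; apply/eqP; ring.
Qed.

End ElementaryRelations.

Section Annihilation.
Variable K : fieldType.
Local Notation P := (pseries K).
Local Notation relation_seq := (seq ({poly K} * P)).
Variables (s s' : P) (U : set (ps K)).
Hypothesis ss' : s * s' = 1.
Hypothesis U_powers : forall u, U u -> exists n, u = s ^+ n \/ u = s' ^+ n.

Definition annihilated (v : fv K) : Prop :=
  exists (G : seq P) (R R' : seq relation_seq),
  [/\ {in R, forall L, is_relation s L}, {in R', forall L, is_relation s' L} &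
      forall lam mu G', {subset G <= G'} ->
        {in R, forall L, respects lam L} -> {in R', forall L, respects mu L} ->
      form_on lam mu G' v = 0].

Lemma annihilated0 : annihilated (fun _ => 0).
Proof. by exists [::], [::], [::]; split=> // *; apply: form_on0. Qed.

Lemma annihilated_comb c v w :
  annihilated v -> annihilated w -> annihilated (fun z => c * v z + w z).
Proof.
move=> [G1 [R1 [R1' [rel1 rel1' null1]]]] [G2 [R2 [R2' [rel2 rel2' null2]]]].
exists (G1 ++ G2), (R1 ++ R2), (R1' ++ R2'); split.
- by move=> L; rewrite mem_cat => /orP [/rel1 | /rel2].
- by move=> L; rewrite mem_cat => /orP [/rel1' | /rel2'].
move=> lam mu G' sub_G' lam_R mu_R; rewrite form_on_comb.
rewrite null1 ?null2 ?mulr0 ?addr0 // => x x_in.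
all: by first [apply: sub_G' | apply: lam_R | apply: mu_R]; rewrite mem_cat x_in ?orbT.
Qed.

Lemma annihilated_addl a a' b : annihilated
  (fv_sub (fv_sub (fv_delta (ps_add a a') b) (fv_delta a b)) (fv_delta a' b)).
Proof.
exists [:: ps_add a a'; a; a'; b], [:: rel_add (ps_add a a') a a'],
  [:: rel_add (ps_add a a') a a'].
split=> [L | L | lam mu G' sub_G' lam_R mu_R];
  try by rewrite inE => /eqP ->; exact: is_relation_add.
have lamD := respects_add (lam_R _ (mem_head _ _)).
have muD := respects_add (mu_R _ (mem_head _ _)).
by rewrite !form_on_sub !form_on_delta ?sub_G' ?inE ?eqxx ?orbT // /altf lamD muD; ring.
Qed.

Lemma annihilated_addr a b b' : annihilated
  (fv_sub (fv_sub (fv_delta a (ps_add b b')) (fv_delta a b)) (fv_delta a b')).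
Proof.
exists [:: a; ps_add b b'; b; b'], [:: rel_add (ps_add b b') b b'],
  [:: rel_add (ps_add b b') b b'].
split=> [L | L | lam mu G' sub_G' lam_R mu_R];
  try by rewrite inE => /eqP ->; exact: is_relation_add.
have lamD := respects_add (lam_R _ (mem_head _ _)).
have muD := respects_add (mu_R _ (mem_head _ _)).
by rewrite !form_on_sub !form_on_delta ?sub_G' ?inE ?eqxx ?orbT // /altf lamD muD; ring.
Qed.

Lemma annihilated_scalel c a b :
  annihilated (fv_sub (fv_delta (ps_scale c a) b) (fun z => c * fv_delta a b z)).
Proof.
exists [:: ps_scale c a; a; b], [:: rel_mul c%:P (ps_scale c a) a],
  [:: rel_mul c%:P (ps_scale c a) a].
split=> [L | L | lam mu G' sub_G' lam_R mu_R];
  try by rewrite inE => /eqP ->; exact: is_relation_scale.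
have lamZ := respects_mul (lam_R _ (mem_head _ _)).
have muZ := respects_mul (mu_R _ (mem_head _ _)).
rewrite form_on_sub form_on_scale !form_on_delta ?sub_G' ?inE ?eqxx ?orbT //.
by rewrite /altf lamZ muZ; ring.
Qed.

Lemma annihilated_scaler c a b :
  annihilated (fv_sub (fv_delta a (ps_scale c b)) (fun z => c * fv_delta a b z)).
Proof.
exists [:: a; ps_scale c b; b], [:: rel_mul c%:P (ps_scale c b) b],
  [:: rel_mul c%:P (ps_scale c b) b].
split=> [L | L | lam mu G' sub_G' lam_R mu_R];
  try by rewrite inE => /eqP ->; exact: is_relation_scale.
have lamZ := respects_mul (lam_R _ (mem_head _ _)).
have muZ := respects_mul (mu_R _ (mem_head _ _)).
rewrite form_on_sub form_on_scale !form_on_delta ?sub_G' ?inE ?eqxx ?orbT //.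
by rewrite /altf lamZ muZ; ring.
Qed.

Lemma annihilated_alt a : annihilated (fv_delta a a).
Proof.
exists [:: a], [::], [::]; split=> // lam mu G' sub_G' _ _.
by rewrite form_on_delta ?sub_G' ?mem_head // /altf subrr.
Qed.

(* [lam] sees [s] as [X] and [mu] sees [s'] as [X]: they scale inversely. *)
Lemma annihilated_shift Q a1 b1 a0 b0 :
    a1 = ev s Q * a0 -> b1 = ev s Q * b0 -> a0 = ev s' Q * a1 -> b0 = ev s' Q * b1 ->
  annihilated (fv_sub (fv_delta a1 b1) (fv_delta a0 b0))
  /\ annihilated (fv_sub (fv_delta a0 b0) (fv_delta a1 b1)).
Proof.
move=> a1E b1E a0E b0E; pose R := [:: rel_mul Q a1 a0; rel_mul Q b1 b0].
pose R' := [:: rel_mul Q a0 a1; rel_mul Q b0 b1].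
have rel_R : {in R, forall L, is_relation s L}.
  by move=> L; rewrite !inE => /orP [] /eqP ->; apply: is_relation_mul.
have rel_R' : {in R', forall L, is_relation s' L}.
  by move=> L; rewrite !inE => /orP [] /eqP ->; apply: is_relation_mul.
have shift lam mu G' : {subset [:: a1; b1; a0; b0] <= G'} ->
    {in R, forall L, respects lam L} -> {in R', forall L, respects mu L} ->
  form_on lam mu G' (fv_delta a1 b1) = form_on lam mu G' (fv_delta a0 b0).
  move=> sub_G' lam_R mu_R; rewrite !form_on_delta ?sub_G' ?inE ?eqxx ?orbT //.
  by apply: (altf_shift (q := Q%:F)); apply: respects_mul;
    first [apply: lam_R | apply: mu_R]; rewrite !inE eqxx ?orbT.
split; exists [:: a1; b1; a0; b0], R, R'; split=> // lam mu G' sub_G' lam_R mu_R.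
  by rewrite form_on_sub shift ?subrr.
by rewrite form_on_sub shift ?subrr.
Qed.

Lemma annihilated_coinv u a b : U u ->
  annihilated (fv_sub (fv_delta (ps_mul u a) (ps_mul u b)) (fv_delta a b)).
Proof.
have s's : s' * s = 1 by rewrite mulrC.
have cancel_pow (x y : P) n c : x * y = 1 -> c = y ^+ n * (x ^+ n * c).
  by move=> xy; rewrite mulrA -exprMn [y * x]mulrC xy expr1n mul1r.
move=> /U_powers [n [-> | ->]].
- have shift := @annihilated_shift 'X^n (s ^+ n * a) (s ^+ n * b) a b.
  by apply: (shift _ _ _ _).1; rewrite evXn // -cancel_pow.
- have shift := @annihilated_shift 'X^n a b (s' ^+ n * a) (s' ^+ n * b).
  by apply: (shift _ _ _ _).2; rewrite evXn // -cancel_pow.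
Qed.

Lemma annihilated_rel v : coinv_ext2_rel U v -> annihilated v.
Proof.
case=> [[a [a' [b ->]]] | [[a [b [b' ->]]] | [[c [a [b ->]]] | [[c [a [b ->]]] | [[a ->] | ]]]]].
- exact: annihilated_addl.
- exact: annihilated_addr.
- exact: annihilated_scalel.
- exact: annihilated_scaler.
- exact: annihilated_alt.
- by move=> [u [a [b [Uu ->]]]]; apply: annihilated_coinv.
Qed.

Lemma annihilated_span v : in_span (coinv_ext2_rel U) v -> annihilated v.
Proof.
elim=> [|c v0 w rel_v0 _ null_w]; first exact: annihilated0.
by apply: annihilated_comb => //; apply: annihilated_rel.
Qed.

Lemma theta_ker_not_free f : theta_ker U f -> ~ (free_over s 1 f /\ free_over s' 1 f).
Proof.
move=> /annihilated_span [G [R [R' [rel_R rel_R' null]]]] [free_s free_s'].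
have [lam [lam_R lam1 lamf]] := exists_functional rel_R free_s.
have [mu [mu_R muf mu1]] := exists_functional rel_R' (free_over_sym free_s').
have sub_G : {subset G <= (1 : P) :: f :: G} by move=> x xG; rewrite !inE xG !orbT.
have := null lam mu _ sub_G lam_R mu_R.
rewrite form_on_delta ?inE ?eqxx ?orbT // /altf lamf mu1 lam1 muf mulr1 mul0r subr0.
by move/eqP; rewrite oner_eq0.
Qed.

End Annihilation.

Local Open Scope classical_set_scope.

Lemma countable_setU T (A B : set T) : countable A -> countable B -> countable (A `|` B).
Proof.
move=> cA cB; apply: (@sub_countable _ _ _ (\bigcup_(b in [set: bool]) if b then A else B)).
  by apply: subset_card_le => x [Ax | Bx]; [exists true | exists false].
by apply: bigcup_countable => // -[].
Qed.

Section Countability.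
Variable K : countFieldType.
Local Notation P := (pseries K).

Lemma coef01_inverse (s s' : P) :
  s * s' = 1 -> s 0%N = 1 -> s' 0%N = 1 /\ s' 1%N = - s 1%N.
Proof.
move=> ss' s0; have coef_ss' n := congr1 (fun f : P => f n) ss'.
have := coef_ss' 0%N; rewrite coef_psM big_ord1 s0 mul1r => s'0; split=> //.
have := coef_ss' 1%N; rewrite coef_psM !big_ord_recl big_ord0 /= s0 s'0 mul1r mulr1 addr0.
by move/eqP; rewrite addr_eq0 => /eqP.
Qed.

(* Such an [f] is [- A(t) / B(t)] with [B != 0], so it is determined by [(A, B)]. *)
Lemma countable_not_free (t : P) : t 0%N = 1 -> t 1%N != 0 ->
  countable [set f : ps K | ~ free_over t 1 f].
Proof.
move=> t0 t1_neq0; pose solves A B (g : P) := ev t A + ev t B * g = 0.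
pose sol (AB : {poly K} * {poly K}) : P := xget 0 (solves AB.1 AB.2).
apply: (@sub_countable _ _ _ (sol @` [set: {poly K} * {poly K}])); last first.
  exact: sub_countable (card_image_le _ _) (countableP _).
apply: subset_card_le => f /= not_free.
have [A [B [solves_f AB_neq0]]] : exists A B, solves A B f /\ ~ (A = 0 /\ B = 0).
  apply: contra_notP not_free => no_AB A B; rewrite mulr1 => eq_AB.
  by apply: contra_notP no_AB => ?; exists A, B.
have B_neq0 : B != 0.
  apply/eqP => B0; apply: AB_neq0; split => //; apply/eqP; apply: contraT => A_neq0.
  by have := ev_neq0 t0 t1_neq0 A_neq0; rewrite -solves_f B0 rmorph0 mul0r addr0 eqxx.
have solves_sol : solves A B (sol (A, B)) by apply: (@xgetPex _ 0 (solves A B)); exists f.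
exists (A, B) => //; apply: (ps_mulfI (ev_neq0 t0 t1_neq0 B_neq0)); apply: (addrI (ev t A)).
by rewrite solves_sol solves_f.
Qed.

Lemma countable_theta_ker_cyclic (s s' : P) (U : set (ps K)) :
    s * s' = 1 -> s 0%N = 1 -> s 1%N != 0 ->
    (forall u, U u -> exists n, u = s ^+ n \/ u = s' ^+ n) ->
  countable (theta_ker U).
Proof.
move=> ss' s0 s1_neq0 U_powers; have [s'0 s'1] := coef01_inverse ss' s0.
apply: (@sub_countable _ _ _
  ([set f | ~ free_over s 1 f] `|` [set f | ~ free_over s' 1 f])).
  apply: subset_card_le => f /(theta_ker_not_free ss' U_powers).
  by move/not_andP.
by apply: countable_setU; apply: countable_not_free; rewrite // s'1 oppr_eq0.
Qed.

End Countability.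

Section DirectedUnion.
Variable K : fieldType.

Lemma in_span_sub (Q1 Q2 : fv K -> Prop) v :
  (forall w, Q1 w -> Q2 w) -> in_span Q1 v -> in_span Q2 v.
Proof.
move=> sub_Q; elim=> [|c v0 w Q1v0 _ IH]; first exact: span0.
by apply: span_step => //; apply: sub_Q.
Qed.

Lemma coinv_ext2_rel_sub (U1 U2 : set (ps K)) v :
  U1 `<=` U2 -> coinv_ext2_rel U1 v -> coinv_ext2_rel U2 v.
Proof.
move=> sub_U [h|[h|[h|[h|[h|[u [a [b [U1u ->]]]]]]]]]; try by rewrite /coinv_ext2_rel; tauto.
by do 5 right; exists u, a, b; split => //; apply: sub_U.
Qed.

(* Each element of the span uses finitely many relations, hence a single [V k]. *)
Lemma theta_ker_directed (U : set (ps K)) I (D : set I) (V : I -> set (ps K)) :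
    D !=set0 -> (forall i j, D i -> D j -> exists2 k, D k & V i `|` V j `<=` V k) ->
    U `<=` \bigcup_(i in D) V i ->
  theta_ker U `<=` \bigcup_(i in D) theta_ker (V i).
Proof.
move=> [i0 Di0] directed sub_U.
suff span_V v : in_span (coinv_ext2_rel U) v ->
    exists2 i, D i & in_span (coinv_ext2_rel (V i)) v.
  by move=> f /span_V [i Di span_f]; exists i.
elim=> [|c v0 w rel_v0 _ [j Dj span_w]]; first by exists i0 => //; apply: span0.
have [i Di rel_i] : exists2 i, D i & coinv_ext2_rel (V i) v0.
  case: rel_v0 => [h|[h|[h|[h|[h|[u [a [b [/sub_U [i Di Viu] ->]]]]]]]]];
    try by exists i0 => //; rewrite /coinv_ext2_rel; tauto.
  by exists i => //; do 5 right; exists u, a, b.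
have [k Dk sub_k] := directed i j Di Dj; exists k => //; apply: span_step.
  by apply: coinv_ext2_rel_sub rel_i => u Viu; apply: sub_k; left.
apply: in_span_sub span_w => w'.
by apply: coinv_ext2_rel_sub => u Vju; apply: sub_k; right.
Qed.

End DirectedUnion.

Section OnePlusXPowers.
Variable K : fieldType.
Local Notation P := (pseries K).

Lemma onepx_mul_inv : (ps_onepx K : P) * ps_onepx_inv K = 1.
Proof.
apply: funext => -[|n]; first by rewrite coef_psM big_ord1 mulr1.
rewrite coef_psM !big_ord_recl big1 => [|i _]; last by rewrite mul0r.
by rewrite /ps_onepx /ps_onepx_inv /= subn0 subSS subn0 !mul1r addr0 exprS mulN1r addNr.
Qed.

Lemma ps_pow_int_powers k : exists n,
  ps_pow_int K k = (ps_onepx K : P) ^+ n \/ ps_pow_int K k = (ps_onepx_inv K : P) ^+ n.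
Proof.
have iterE (x : P) n : iter n (ps_mul x) (ps_one K) = x ^+ n.
  by elim: n => //= n ->; rewrite exprS.
by case: k => n; [exists n; left | exists n.+1; right]; rewrite /ps_pow_int iterE.
Qed.

End OnePlusXPowers.

Section RationalBinomialSeries.
Local Notation P := (pseries rat).

Lemma binom_rat0 r : binom_rat r 0 = 1.
Proof. by rewrite /binom_rat big_ord0 fact0 divr1. Qed.

Lemma binom_rat1 r : binom_rat r 1 = r.
Proof. by rewrite /binom_rat big_ord1 subr0 divr1. Qed.

Lemma binom_ratS r n : n.+1%:R * binom_rat r n.+1 = (r - n%:R) * binom_rat r n.
Proof.
rewrite /binom_rat big_ord_recr /= factS natrM.
have n1_neq0 : n.+1%:R != 0 :> rat by rewrite pnatr_eq0.
have fact_neq0 : n`!%:R != 0 :> rat by rewrite pnatr_eq0 -lt0n fact_gt0.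
by field; rewrite fact_neq0 nat1r n1_neq0.
Qed.

Lemma vandermonde_step r r' n :
  n.+1%:R * (\sum_(i < n.+2) binom_rat r i * binom_rat r' (n.+1 - i))
  = (r + r' - n%:R) * (\sum_(i < n.+1) binom_rat r i * binom_rat r' (n - i)).
Proof.
have split_n1 (i : 'I_n.+2) : n.+1%:R * (binom_rat r i * binom_rat r' (n.+1 - i))
   = (i%:R * binom_rat r i) * binom_rat r' (n.+1 - i)
     + binom_rat r i * ((n.+1 - i)%:R * binom_rat r' (n.+1 - i)).
  have le_in1 : (i <= n.+1)%N by rewrite -ltnS.
  by rewrite -{1}(subnKC le_in1) natrD; ring.
rewrite mulr_sumr (eq_bigr _ (fun i _ => split_n1 i)) big_split /=.
rewrite big_ord_recl /= !mul0r add0r [X in _ + X = _]big_ord_recr /= subnn mul0r mulr0.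
rewrite addr0 mulr_sumr -big_split /=; apply: eq_bigr => i _.
have le_in : (i <= n)%N by rewrite -ltnS.
by rewrite /bump /= add1n subSS binom_ratS subSn // binom_ratS natrB //; ring.
Qed.

Lemma onepx_ratD r r' : onepx_rat (r + r') = (onepx_rat r : P) * onepx_rat r'.
Proof.
apply: funext => n; rewrite coef_psM /onepx_rat; elim: n => [|n IH].
  by rewrite big_ord1 !binom_rat0 mulr1.
by apply: (@mulfI _ n.+1%:R); rewrite ?pnatr_eq0 // binom_ratS vandermonde_step IH.
Qed.

Lemma onepx_rat0 : onepx_rat 0 = 1 :> P.
Proof.
apply: funext => -[|n]; first exact: binom_rat0.
by rewrite /onepx_rat /binom_rat big_ord_recl subrr !mul0r.
Qed.

Lemma onepx_rat_natM n r : onepx_rat (n%:R * r) = (onepx_rat r : P) ^+ n.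
Proof.
elim: n => [|n IH]; first by rewrite mul0r onepx_rat0.
by rewrite -natr1 mulrDl mul1r addrC onepx_ratD IH exprS.
Qed.

Definition onepx_rat_den (d : int) : set (ps rat) :=
  [set onepx_rat (k%:~R / d%:~R) | k in [set: int]].

Lemma onepx_rat_den_powers d u : onepx_rat_den d u -> exists n,
  u = (onepx_rat d%:~R^-1 : P) ^+ n \/ u = (onepx_rat (- d%:~R^-1) : P) ^+ n.
Proof.
case=> -[n | n] _ <-; [exists n; left | exists n.+1; right]; rewrite -onepx_rat_natM //.
by rewrite NegzE mulrNz mulrN mulNr.
Qed.

Lemma countable_theta_ker_onepx_rat_den d :
  0 < d -> countable (theta_ker (onepx_rat_den d)).
Proof.
move=> d_gt0; have d_neq0 : d%:~R != 0 :> rat by rewrite intr_eq0 gt_eqF.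
apply: (countable_theta_ker_cyclic (s := onepx_rat d%:~R^-1) (s' := onepx_rat (- d%:~R^-1))).
- by rewrite -onepx_ratD subrr onepx_rat0.
- exact: binom_rat0.
- by rewrite /onepx_rat binom_rat1 invr_eq0.
- exact: onepx_rat_den_powers.
Qed.

Lemma range_onepx_rat_sub :
  range onepx_rat `<=` \bigcup_(d in [set d : int | 0 < d]) onepx_rat_den d.
Proof.
move=> _ [r _ <-]; exists (denq r); first exact: denq_gt0.
by exists (numq r); rewrite ?divq_num_den.
Qed.

Lemma onepx_rat_den_directed d e : 0 < d -> 0 < e ->
  exists2 k, 0 < k & onepx_rat_den d `|` onepx_rat_den e `<=` onepx_rat_den k.
Proof.
move=> d_gt0 e_gt0; exists (d * e); first exact: mulr_gt0.
have d_neq0 : d%:~R != 0 :> rat by rewrite intr_eq0 gt_eqF.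
have e_neq0 : e%:~R != 0 :> rat by rewrite intr_eq0 gt_eqF.
move=> _ [[k _ <-] | [k _ <-]]; [exists (k * e) | exists (k * d)] => //.
all: by rewrite !intrM; congr onepx_rat; field; rewrite d_neq0 e_neq0.
Qed.

End RationalBinomialSeries.

Theorem proposition2p1 :
  countable (theta_ker (range onepx_rat))
  /\ (forall p : nat, prime p -> odd p ->
        countable (theta_ker (range (@ps_pow_int 'F_p)))).
Proof.
(* Over any countable field the argument needs no assumption on [p]. *)
split=> [|p _ _].
- apply: sub_countable (subset_card_le (theta_ker_directed _ _ range_onepx_rat_sub)) _.
  + by exists 1.
  + exact: onepx_rat_den_directed.
  + by apply: bigcup_countable => // d; apply: countable_theta_ker_onepx_rat_den.
- apply: (countable_theta_ker_cyclic (s := ps_onepx _) (s' := ps_onepx_inv _)) => //.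
  + exact: onepx_mul_inv.
  + by move=> _ [k _ <-]; apply: ps_pow_int_powers.
Qed.
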